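(* Let $\mathcal{S}=\langle\mathcal{L},\vdash\rangle$ be a logical structure with $\mathcal{L}$ infinite, and let $\varrho\subseteq\mathcal{P}(\mathcal{L})\times\mathcal{L}$ have finite reach. Then for every finite $\Gamma\subseteq\mathcal{L}$ there exists $\beta\in\mathcal{L}$ such that $\Gamma\not\vdash^\varrho\beta$. The same holds with $\vdash^{p\varrho}$ in place of $\vdash^\varrho$.
   Context: A logical structure is a pair $\langle\mathcal{L},\vdash\rangle$ with $\mathcal{L}$ a set and $\vdash\subseteq\mathcal{P}(\mathcal{L})\times\mathcal{L}$ arbitrary. For $\varrho\subseteq\mathcal{P}(\mathcal{L})\times\mathcal{L}$: $\Gamma\vdash^\varrho\alpha$ iff there is $\Delta\subseteq\Gamma$ with $(\Delta,\alpha)\in\varrho$ and $\Delta\vdash\alpha$; $\Gamma\vdash^{p\varrho}\alpha$ iff there is a nonempty $\Delta\subseteq\Gamma$ with $(\Delta,\alpha)\in\varrho$ and $\Delta\vdash\alpha$. A relation $\varrho\subseteq A\times B$ has finite reach if for every $a\in A$ the set $\{b\in B\mid (a,b)\in\varrho\}$ is finite. *)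

From Stdlib Require Import List.

Definition subset {L : Type} (A B : L -> Prop) : Prop := forall x, A x -> B x.

Definition finite_set {L : Type} (A : L -> Prop) : Prop :=
  exists l : list L, forall x, A x <-> In x l.

Definition infinite_type (L : Type) : Prop :=
  ~ exists l : list L, forall x : L, In x l.

Definition finite_reach {A B : Type} (rho : A -> B -> Prop) : Prop :=
  forall a : A, finite_set (fun b => rho a b).

Definition vdash_rho {L : Type} (vdash : (L -> Prop) -> L -> Prop)
  (rho : (L -> Prop) -> L -> Prop) (Gamma : L -> Prop) (alpha : L) : Prop :=
  exists Delta : L -> Prop, subset Delta Gamma /\ rho Delta alpha /\ vdash Delta alpha.

Definition vdash_prho {L : Type} (vdash : (L -> Prop) -> L -> Prop)
  (rho : (L -> Prop) -> L -> Prop) (Gamma : L -> Prop) (alpha : L) : Prop :=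
  exists Delta : L -> Prop, (exists x, Delta x) /\ subset Delta Gamma /\
    rho Delta alpha /\ vdash Delta alpha.

(** Since [rho] need not respect extensional equality of predicates, the
    subsets of a finite [Gamma] are first identified (by extensionality) with
    the finitely many sublists of a list enumerating [Gamma].  Finite reach then
    bounds all [beta] with [rho Delta beta], [Delta ⊆ Gamma], by one finite
    list, and any [beta] outside it (which exists as [L] is infinite) is
    underivable from [Gamma] in either sense. *)

From Stdlib Require Import List Classical FunctionalExtensionality PropExtensionality.

Lemma pred_ext {L : Type} (A B : L -> Prop) : (forall x, A x <-> B x) -> A = B.
Proof.
  intros HAB. apply functional_extensionality. intros x.
  apply propositional_extensionality. apply HAB.
Qed.

Fixpoint sublists {L : Type} (l : list L) : list (list L) :=
  match l with
  | nil => nil :: nil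
  | a :: l' => map (cons a) (sublists l') ++ sublists l'
  end.

Lemma sublists_represent {L : Type} (l : list L) (D : L -> Prop) :
  subset D (fun x => In x l) ->
  exists s, In s (sublists l) /\ forall x, D x <-> In x s.
Proof.
  revert D; induction l as [|a l IH]; intros D HD; simpl.
  - exists nil. split; [now left|]. intros x. split; [apply HD | intros []].
  - destruct (classic (D a)) as [Da | nDa].
    + destruct (IH (fun x => D x /\ x <> a)) as [s [Hs HDs]].
      { intros x [Dx Hxa]. destruct (HD x Dx); [congruence | assumption]. }
      exists (a :: s). split.
      * apply in_or_app. left. now apply in_map.
      * intros x. simpl. rewrite <- HDs. split.
        -- intros Dx. destruct (classic (x = a)) as [-> | Hxa]; [now left | now right].
        -- intros [<- | [Dx _]]; assumption.
    + destruct (IH D) as [s [Hs HDs]].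
      { intros x Dx. destruct (HD x Dx) as [-> | Hx]; [contradiction | assumption]. }
      exists s. split; [apply in_or_app; now right | exact HDs].
Qed.

Lemma subset_finite_eq_list {L : Type} (l : list L) (D : L -> Prop) :
  subset D (fun x => In x l) ->
  exists s, In s (sublists l) /\ D = (fun x => In x s).
Proof.
  intros HD. destruct (sublists_represent l D HD) as [s [Hs HDs]].
  exists s. split; [exact Hs | now apply pred_ext].
Qed.

Lemma finite_reach_list_image {A B : Type} (rho : A -> B -> Prop) :
  finite_reach rho -> forall S : list A,
  exists m : list B, forall a b, In a S -> rho a b -> In b m.
Proof.
  intros Hrho S. induction S as [|a0 S [m Hm]].
  - exists nil. intros a b [].
  - destruct (Hrho a0) as [m0 Hm0].
    exists (m0 ++ m). intros a b [<- | Ha] Hab; apply in_or_app.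
    + left. now apply Hm0.
    + right. exact (Hm a b Ha Hab).
Qed.

Lemma finite_reach_subsets {L B : Type} (rho : (L -> Prop) -> B -> Prop)
  (Gamma : L -> Prop) :
  finite_reach rho -> finite_set Gamma ->
  exists m : list B, forall Delta b, subset Delta Gamma -> rho Delta b -> In b m.
Proof.
  intros Hrho [l Hl].
  destruct (finite_reach_list_image rho Hrho
              (map (fun s x => In x s) (sublists l))) as [m Hm].
  exists m. intros Delta b HDelta Hb.
  destruct (subset_finite_eq_list l Delta) as [s [Hs ->]].
  { intros x Dx. now apply Hl, HDelta. }
  apply (Hm (fun x => In x s) b); [now apply (in_map (fun s x => In x s)) | exact Hb].
Qed.

Lemma infinite_type_not_In {L : Type} (m : list L) :
  infinite_type L -> exists b, ~ In b m.
Proof.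
  intros Hinf. apply NNPP. intros Hall. apply Hinf. exists m. intros x.
  apply NNPP. intros Hx. apply Hall. now exists x.
Qed.

Lemma vdash_prho_vdash_rho {L : Type} (vdash rho : (L -> Prop) -> L -> Prop)
  (Gamma : L -> Prop) (alpha : L) :
  vdash_prho vdash rho Gamma alpha -> vdash_rho vdash rho Gamma alpha.
Proof.
  intros [Delta [_ HDelta]]. now exists Delta.
Qed.

Theorem theorem3p15 (L : Type) (vdash : (L -> Prop) -> L -> Prop)
  (rho : (L -> Prop) -> L -> Prop) :
  infinite_type L ->
  finite_reach rho ->
  forall Gamma : L -> Prop, finite_set Gamma ->
    (exists beta : L, ~ vdash_rho vdash rho Gamma beta) /\
    (exists beta : L, ~ vdash_prho vdash rho Gamma beta).
Proof.
  intros Hinf Hrho Gamma HGamma.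
  destruct (finite_reach_subsets rho Gamma Hrho HGamma) as [m Hm].
  destruct (infinite_type_not_In m Hinf) as [beta Hbeta].
  assert (Hnot : ~ vdash_rho vdash rho Gamma beta).
  { intros [Delta [HDelta [Hrb _]]]. exact (Hbeta (Hm Delta beta HDelta Hrb)). }
  split; exists beta; [exact Hnot |].
  intros H. exact (Hnot (vdash_prho_vdash_rho vdash rho Gamma beta H)).
Qed.
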